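(* Consider a planar dual linear antenna array with wavelength $\lambda>0$: sub-array 1 has $N_1$ elements at positions $((n-1)d,\,0)$, $n=1,\dots,N_1$, and sub-array 2 has $N_2$ elements at positions $(x_{2,1}+(n-1)d,\; y_{2,1})$, $n=1,\dots,N_2$, with common spacing $d>0$ and $y_{2,1}\neq 0$. For a complex weight vector $\mathbf w=(w_{m,n})$ (not identically zero), the beam pattern is $$f_{\mathbf w}(\theta)=\frac{\sum_{n=1}^{N_1} w_{1,n}e^{j2\pi(n-1)d\sin\theta/\lambda}+e^{j2\pi(x_{2,1}\sin\theta+y_{2,1}\cos\theta)/\lambda}\sum_{n=1}^{N_2} w_{2,n}e^{j2\pi(n-1)d\sin\theta/\lambda}}{\sum_{n=1}^{N_1}|w_{1,n}|+\sum_{n=1}^{N_2}|w_{2,n}|}.$$ Suppose that for all $p\in\mathbb Z\setminus\{0\}$ and all $q\in\mathbb Z$, $$\left(\frac{p}{d/\lambda}\right)^2+\left(\frac{q\,d/\lambda-p\,x_{2,1}/\lambda}{(d/\lambda)(y_{2,1}/\lambda)}\right)^2>4 .$$ Then the beam pattern is not periodic: for no $\theta\in[0,2\pi)$ does there exist an angle $\mathfrak M(\theta)\neq\theta$ with $f_{\mathbf w}(\theta)=f_{\mathbf w}(\mathfrak M(\theta))$ for every weight vector $\mathbf w$. In particular, no grating lobes exist.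
   Context: Angles $\theta$ parametrize far-field directions in the plane via the unit vector $(\sin\theta,\cos\theta)$. Definition (principle of grating lobes): the beam pattern $f_{\mathbf w}(\cdot)$ is called periodic (on an angular interval) if there is a mapping $\mathfrak M$ with $\mathfrak M(\theta)\neq\theta$ and $f_{\mathbf w}(\theta)=f_{\mathbf w}(\mathfrak M(\theta))$ for every weight vector $\mathbf w$ and every $\theta$ in the interval; $\mathfrak M$ is called the period mapping. If the absolute radiation maxima occur within such an interval, the pattern is said to exhibit grating lobes.
   Formalization: No nondegenerate interval [a,b] ⊆ [0,2π], rather than no single θ, admits a period mapping; 𝔐(θ) ≠ θ means differing (sin θ, cos θ); N₁, N₂ ≥ 1 and N₁ ≥ 2 or N₂ ≥ 2. Apart from conventions, each condition added here is assumed in the paper as well or is needed for the statement above to hold. *)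

From Stdlib Require Import Reals.
From Coquelicot Require Import Coquelicot.
Open Scope R_scope.

Definition cis (phi : R) : C := (cos phi, sin phi).

Fixpoint csum (f : nat -> C) (n : nat) : C :=
  match n with O => RtoC 0 | S k => Cplus (csum f k) (f k) end.

Fixpoint rsum (f : nat -> R) (n : nat) : R :=
  match n with O => 0 | S k => rsum f k + f k end.

(* Weight vector: w1 n = w_{1,n+1} (n < N1), w2 n = w_{2,n+1} (n < N2). *)
Definition weights_nonzero (N1 N2 : nat) (w1 w2 : nat -> C) : Prop :=
  (exists n, (n < N1)%nat /\ w1 n <> RtoC 0) \/
  (exists n, (n < N2)%nat /\ w2 n <> RtoC 0).

Definition beam (lam d x21 y21 : R) (N1 N2 : nat) (w1 w2 : nat -> C)
    (theta : R) : C :=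
  Cdiv
    (Cplus
       (csum (fun n => Cmult (w1 n) (cis (2 * PI * INR n * d * sin theta / lam))) N1)
       (Cmult (cis (2 * PI * (x21 * sin theta + y21 * cos theta) / lam))
          (csum (fun n => Cmult (w2 n) (cis (2 * PI * INR n * d * sin theta / lam))) N2)))
    (RtoC (rsum (fun n => Cmod (w1 n)) N1 + rsum (fun n => Cmod (w2 n)) N2)).

Definition distinct_dir (t1 t2 : R) : Prop :=
  sin t1 <> sin t2 \/ cos t1 <> cos t2.

Definition periodic_on (lam d x21 y21 : R) (N1 N2 : nat) (a b : R) : Prop :=
  exists M : R -> R,
    forall theta, a <= theta <= b ->
      distinct_dir (M theta) theta /\
      forall w1 w2 : nat -> C, weights_nonzero N1 N2 w1 w2 ->
        beam lam d x21 y21 N1 N2 w1 w2 theta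
        = beam lam d x21 y21 N1 N2 w1 w2 (M theta).

(* Test the identity f_w(theta) = f_w(M theta) against weights that switch on only the
   first one or two elements of each sub-array: this forces the inter-element phase
   2 pi d sin(theta) / lam and the sub-array phase 2 pi (x21 sin(theta) + y21 cos(theta)) / lam
   to agree at theta and M theta modulo 2 pi.  Hence the difference (Ds, Dc) of the two
   direction vectors satisfies d Ds / lam = p and (x21 Ds + y21 Dc) / lam = q for integers
   p, q.  For p <> 0 the hypothesis gives Ds^2 + Dc^2 > 4, impossible for two unit vectors.
   For p = 0 the directions are mirror images, Dc = 2 cos(theta), and
   q = 2 y21 cos(theta) / lam.  Such a theta with cos(theta) <> 0 really has the period
   PI - theta, so it is avoided by choosing theta in [a, b] with 2 y21 cos(theta) / lam not
   an integer, which exists because cos is not constant on [a, b]. *)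

From Stdlib Require Import Reals ZArith Lra Lia.
From Coquelicot Require Import Coquelicot.
Open Scope R_scope.

Lemma cis_0 : cis 0 = 1%C.
Proof. unfold cis. rewrite cos_0, sin_0. reflexivity. Qed.

Lemma cis_neq_0 (x : R) : cis x <> 0%C.
Proof.
  intros E. injection E as Ec Es. pose proof (sin2_cos2 x) as S.
  rewrite Ec, Es in S. unfold Rsqr in S. lra.
Qed.

Lemma cis_eq_cis (x y : R) : cis x = cis y -> exists k : Z, x - y = 2 * PI * IZR k.
Proof.
  intros E. injection E as Ec Es.
  assert (cos (x - y) = 1) as Hcos.
  { rewrite cos_minus, Ec, Es. pose proof (sin2_cos2 y). unfold Rsqr in *. lra. }
  assert (sin ((x - y) / 2) = 0) as Hsin.
  { pose proof (cos_2a_sin ((x - y) / 2)) as H.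
    replace (2 * ((x - y) / 2)) with (x - y) in H by field. nra. }
  destruct (sin_eq_0_0 _ Hsin) as [k Hk]. exists k. lra.
Qed.

Lemma Cplus_eq_reg_l (a b c : C) : (a + b = a + c)%C -> b = c.
Proof.
  intros E. replace b with (a + b - a)%C by ring. rewrite E. ring.
Qed.

Lemma Cdiv_eq_reg_r (a b c : C) : c <> 0%C -> (a / c = b / c)%C -> a = b.
Proof.
  intros Hc E. replace a with (a / c * c)%C by (field; exact Hc).
  rewrite E. field; exact Hc.
Qed.

Lemma Cmult_eq_reg_l (a b c : C) : c <> 0%C -> (c * a = c * b)%C -> a = b.
Proof.
  intros Hc E. replace a with (/ c * (c * a))%C by (field; exact Hc).
  rewrite E. field; exact Hc.
Qed.

Lemma csum_ext (f g : nat -> C) (N : nat) :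
  (forall n, (n < N)%nat -> f n = g n) -> csum f N = csum g N.
Proof.
  induction N as [|N IH]; intros Hfg; [reflexivity|].
  cbn [csum]. rewrite IH by (intros; apply Hfg; lia). rewrite Hfg by lia. reflexivity.
Qed.

Lemma rsum_ext (f g : nat -> R) (N : nat) :
  (forall n, (n < N)%nat -> f n = g n) -> rsum f N = rsum g N.
Proof.
  induction N as [|N IH]; intros Hfg; [reflexivity|].
  cbn [rsum]. rewrite IH by (intros; apply Hfg; lia). rewrite Hfg by lia. reflexivity.
Qed.

Definition prefix_weight (k n : nat) : C := if (n <? k)%nat then 1%C else 0%C.

Lemma prefix_weight_0_neq_0 (k : nat) : (0 < k)%nat -> prefix_weight k 0 <> 0%C.
Proof.
  intros Hk. unfold prefix_weight. rewrite (proj2 (Nat.ltb_lt _ _) Hk).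
  intros E. injection E. lra.
Qed.

Lemma csum_prefix_weight (z : nat -> C) (k N : nat) : (k <= N)%nat ->
  csum (fun n => Cmult (prefix_weight k n) (z n)) N = csum z k.
Proof.
  induction 1 as [|N HkN IH].
  - apply csum_ext. intros n Hn. unfold prefix_weight.
    rewrite (proj2 (Nat.ltb_lt _ _) Hn). apply Cmult_1_l.
  - cbn [csum]. rewrite IH. unfold prefix_weight.
    rewrite (proj2 (Nat.ltb_ge _ _)) by lia. rewrite Cmult_0_l. apply Cplus_0_r.
Qed.

Lemma rsum_Cmod_prefix_weight (k N : nat) : (k <= N)%nat ->
  rsum (fun n => Cmod (prefix_weight k n)) N = INR k.
Proof.
  induction 1 as [|N HkN IH].
  - rewrite (rsum_ext _ (fun _ => 1)).
    + induction k as [|k IH]; [reflexivity|]. cbn [rsum]. rewrite IH, S_INR. reflexivity.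
    + intros n Hn. unfold prefix_weight. rewrite (proj2 (Nat.ltb_lt _ _) Hn). apply Cmod_1.
  - cbn [rsum]. rewrite IH. unfold prefix_weight.
    rewrite (proj2 (Nat.ltb_ge _ _)) by lia. rewrite Cmod_0. ring.
Qed.

Definition steering_sum (alpha : R) (k : nat) : C := csum (fun n => cis (INR n * alpha)) k.

Lemma steering_sum_0 (alpha : R) : steering_sum alpha 0 = 0%C.
Proof. reflexivity. Qed.

Lemma steering_sum_1 (alpha : R) : steering_sum alpha 1 = 1%C.
Proof.
  unfold steering_sum. cbn [csum]. rewrite Rmult_0_l, cis_0. apply Cplus_0_l.
Qed.

Lemma steering_sum_2 (alpha : R) : steering_sum alpha 2 = (1 + cis alpha)%C.
Proof.
  change (steering_sum alpha 1 + cis (INR 1 * alpha) = 1 + cis alpha)%C.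
  rewrite steering_sum_1, Rmult_1_l. reflexivity.
Qed.

Definition element_phase (lam d theta : R) : R := 2 * PI * d * sin theta / lam.

Definition subarray_phase (lam x21 y21 theta : R) : R :=
  2 * PI * (x21 * sin theta + y21 * cos theta) / lam.

Lemma beam_prefix_weights (lam d x21 y21 : R) (N1 N2 k1 k2 : nat) (theta : R) :
  (k1 <= N1)%nat -> (k2 <= N2)%nat ->
  beam lam d x21 y21 N1 N2 (prefix_weight k1) (prefix_weight k2) theta =
  ((steering_sum (element_phase lam d theta) k1
    + cis (subarray_phase lam x21 y21 theta) * steering_sum (element_phase lam d theta) k2)
   / INR (k1 + k2))%C.
Proof.
  intros Hk1 Hk2. unfold beam.
  rewrite !csum_prefix_weight, !rsum_Cmod_prefix_weight, plus_INR by assumption.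
  assert (Hsteer : forall k, csum (fun n => cis (2 * PI * INR n * d * sin theta / lam)) k
                            = steering_sum (element_phase lam d theta) k).
  { intros k. apply csum_ext. intros n _. unfold element_phase. f_equal. unfold Rdiv. ring. }
  rewrite !Hsteer. reflexivity.
Qed.

Lemma phases_of_beam_invariance (lam d x21 y21 : R) (N1 N2 : nat) (theta t : R) :
  (1 <= N1)%nat -> (1 <= N2)%nat -> ((2 <= N1)%nat \/ (2 <= N2)%nat) ->
  (forall w1 w2 : nat -> C, weights_nonzero N1 N2 w1 w2 ->
     beam lam d x21 y21 N1 N2 w1 w2 theta = beam lam d x21 y21 N1 N2 w1 w2 t) ->
  cis (subarray_phase lam x21 y21 theta) = cis (subarray_phase lam x21 y21 t) /\
  cis (element_phase lam d theta) = cis (element_phase lam d t).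
Proof.
  intros HN1 HN2 HN Hinv.
  set (a := element_phase lam d theta); set (a' := element_phase lam d t).
  set (b := subarray_phase lam x21 y21 theta); set (b' := subarray_phase lam x21 y21 t).
  assert (Hsums : forall k1 k2, (k1 <= N1)%nat -> (k2 <= N2)%nat -> (0 < k1 \/ 0 < k2)%nat ->
    (steering_sum a k1 + cis b * steering_sum a k2
     = steering_sum a' k1 + cis b' * steering_sum a' k2)%C).
  { intros k1 k2 Hk1 Hk2 Hk. apply (Cdiv_eq_reg_r _ _ (INR (k1 + k2))).
    - intros E. injection E as E. revert E. apply not_0_INR. lia.
    - unfold a, a', b, b'. rewrite <- !(beam_prefix_weights lam d x21 y21 N1 N2) by assumption. apply Hinv.
      destruct Hk; [left | right]; exists 0%nat;
        (split; [lia | apply prefix_weight_0_neq_0; assumption]). }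
  assert (Hb : cis b = cis b').
  { specialize (Hsums 1%nat 1%nat HN1 HN2 (or_introl Nat.lt_0_1)).
    rewrite !steering_sum_1, !Cmult_1_r in Hsums. exact (Cplus_eq_reg_l _ _ _ Hsums). }
  split; [exact Hb |]. apply (Cplus_eq_reg_l 1).
  destruct HN as [HN | HN].
  - specialize (Hsums 2%nat 0%nat HN (Nat.le_0_l _) (or_introl Nat.lt_0_2)).
    rewrite !steering_sum_2, !steering_sum_0, !Cmult_0_r, !Cplus_0_r in Hsums.
    exact Hsums.
  - specialize (Hsums 0%nat 2%nat (Nat.le_0_l _) HN (or_intror Nat.lt_0_2)).
    rewrite !steering_sum_2, !steering_sum_0, !Cplus_0_l, <- Hb in Hsums.
    exact (Cmult_eq_reg_l _ _ _ (cis_neq_0 b) Hsums).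
Qed.

Lemma sin_cos_diff_sq_le_4 (x y : R) : (sin x - sin y) ^ 2 + (cos x - cos y) ^ 2 <= 4.
Proof.
  pose proof (sin2_cos2 x). pose proof (sin2_cos2 y). unfold Rsqr in *.
  pose proof (pow2_ge_0 (sin x + sin y)). pose proof (pow2_ge_0 (cos x + cos y)). nra.
Qed.

Lemma cos_eq_opp_of_sin_eq (x y : R) : sin x = sin y -> cos x <> cos y -> cos y = - cos x.
Proof.
  intros Hs Hc. pose proof (sin2_cos2 x). pose proof (sin2_cos2 y). unfold Rsqr in *.
  assert ((cos y - cos x) * (cos y + cos x) = 0) as E by (rewrite Hs in *; nra).
  destruct (Rmult_integral _ _ E); lra.
Qed.

Lemma exists_non_integer_between (lo hi : R) : lo < hi ->
  exists r, lo < r < hi /\ forall q : Z, r <> IZR q.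
Proof.
  intros Hlh. destruct (archimed lo) as [Hup1 Hup2].
  pose proof (Rmin_l hi (IZR (up lo))). pose proof (Rmin_r hi (IZR (up lo))).
  set (m := Rmin hi (IZR (up lo))) in *.
  assert (lo < m) by (apply Rmin_glb_lt; lra).
  exists ((lo + m) / 2). split; [lra |]. intros q Hq.
  assert (IZR (up lo) - 1 < IZR q < IZR (up lo)) as [Hq1 Hq2] by lra.
  rewrite <- minus_IZR in Hq1. apply lt_IZR in Hq1. apply lt_IZR in Hq2. lia.
Qed.

Lemma cos_not_constant (a b : R) : 0 <= a -> a < b -> b <= 2 * PI ->
  exists t1 t2, a <= t1 <= b /\ a <= t2 <= b /\ cos t1 <> cos t2.
Proof.
  intros Ha Hab Hb. pose proof PI_RGT_0.
  destruct (Rlt_le_dec a PI) as [HaPI | HaPI].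
  - exists a, (Rmin b PI).
    pose proof (Rmin_l b PI). pose proof (Rmin_r b PI).
    assert (a < Rmin b PI) by (apply Rmin_glb_lt; lra).
    pose proof (cos_decreasing_1 a (Rmin b PI)). repeat split; lra.
  - exists a, b. pose proof (cos_increasing_1 a b). repeat split; lra.
Qed.

Lemma exists_angle_cos_non_integer (K a b : R) : K <> 0 -> 0 <= a -> a < b -> b <= 2 * PI ->
  exists theta, a <= theta <= b /\ forall q : Z, K * cos theta <> IZR q.
Proof.
  intros HK Ha Hab Hb.
  destruct (cos_not_constant a b Ha Hab Hb) as (t1 & t2 & Ht1 & Ht2 & Hc).
  assert (K * cos t1 <> K * cos t2) as Hf by (intros E; apply Hc, (Rmult_eq_reg_l K); auto).
  assert (Rmin (K * cos t1) (K * cos t2) < Rmax (K * cos t1) (K * cos t2)) as Hlt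
    by (unfold Rmin, Rmax; destruct Rle_dec; lra).
  destruct (exists_non_integer_between _ _ Hlt) as (r & Hr & Hnint).
  destruct (IVT_gen (fun x => K * cos x) t1 t2 r) as (theta & Htheta & Hval).
  - exact (continuity_scal cos K continuity_cos).
  - lra.
  - exists theta. split.
    + pose proof (Rmin_glb t1 t2 a). pose proof (Rmax_lub t1 t2 b). lra.
    + intros q E. apply (Hnint q). rewrite <- Hval. exact E.
Qed.

Lemma equal_phases_same_direction (lam d x21 y21 theta t : R) :
  0 < lam -> 0 < d -> y21 <> 0 ->
  (forall p q : Z, p <> 0%Z ->
     (IZR p / (d / lam)) ^ 2
     + ((IZR q * (d / lam) - IZR p * (x21 / lam)) / ((d / lam) * (y21 / lam))) ^ 2
     > 4) ->
  (forall q : Z, 2 * (y21 / lam) * cos theta <> IZR q) ->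
  cis (subarray_phase lam x21 y21 theta) = cis (subarray_phase lam x21 y21 t) ->
  cis (element_phase lam d theta) = cis (element_phase lam d t) ->
  ~ distinct_dir t theta.
Proof.
  intros Hlam Hd Hy Hlattice Hnint Hsub Helem Hdist. pose proof PI_RGT_0.
  destruct (cis_eq_cis _ _ Helem) as [p Hp].
  destruct (cis_eq_cis _ _ Hsub) as [q Hq].
  assert (IZR p = d / lam * (sin theta - sin t)) as Hp'.
  { apply (Rmult_eq_reg_l (2 * PI)); [| lra].
    rewrite <- Hp. unfold element_phase. field. lra. }
  assert (IZR q = (x21 * (sin theta - sin t) + y21 * (cos theta - cos t)) / lam) as Hq'.
  { apply (Rmult_eq_reg_l (2 * PI)); [| lra].
    rewrite <- Hq. unfold subarray_phase. field. lra. }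
  destruct (Z.eq_dec p 0) as [-> | Hp0].
  - assert (sin t = sin theta) as Hs.
    { assert (0 < d / lam) by (apply Rdiv_lt_0_compat; lra). simpl in Hp'. nra. }
    assert (cos theta = - cos t) as Hc.
    { apply cos_eq_opp_of_sin_eq; [exact Hs |]. destruct Hdist as [Hsin | Hcos]; [contradiction | exact Hcos]. }
    apply (Hnint q). rewrite Hq', Hs, Hc. field. lra.
  - specialize (Hlattice p q Hp0).
    replace (IZR p / (d / lam)) with (sin theta - sin t) in Hlattice
      by (rewrite Hp'; field; lra).
    replace ((IZR q * (d / lam) - IZR p * (x21 / lam)) / (d / lam * (y21 / lam)))
      with (cos theta - cos t) in Hlattice by (rewrite Hp', Hq'; field; lra).
    pose proof (sin_cos_diff_sq_le_4 theta t). lra.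
Qed.

Theorem theorem2 (lam d x21 y21 : R) (N1 N2 : nat) :
  0 < lam -> 0 < d -> y21 <> 0 ->
  (1 <= N1)%nat -> (1 <= N2)%nat -> ((2 <= N1)%nat \/ (2 <= N2)%nat) ->
  (forall p q : Z, p <> 0%Z ->
     (IZR p / (d / lam)) ^ 2
     + ((IZR q * (d / lam) - IZR p * (x21 / lam)) / ((d / lam) * (y21 / lam))) ^ 2
     > 4) ->
  forall a b : R, 0 <= a -> a < b -> b <= 2 * PI ->
    ~ periodic_on lam d x21 y21 N1 N2 a b.
Proof.
  intros Hlam Hd Hy HN1 HN2 HN Hlattice a b Ha Hab Hb [M HM].
  assert (2 * (y21 / lam) <> 0) as HK.
  { intros E. apply Hy. replace y21 with (2 * (y21 / lam) * (lam / 2)) by (field; lra).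
    rewrite E. ring. }
  destruct (exists_angle_cos_non_integer _ a b HK Ha Hab Hb) as (theta & Htheta & Hnint).
  destruct (HM theta Htheta) as [Hdist Hinv].
  destruct (phases_of_beam_invariance lam d x21 y21 N1 N2 theta (M theta) HN1 HN2 HN Hinv)
    as [Hsub Helem].
  exact (equal_phases_same_direction lam d x21 y21 theta (M theta)
           Hlam Hd Hy Hlattice Hnint Hsub Helem Hdist).
Qed.
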